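(* Let $\epsilon=1/50$, let $v\ge 1$, and let $t\in\{0,1\}^v$. Suppose that for every $s\in\{0,1\}^v$ we are given a bit $b_s$ satisfying $b_s=1$ if $\langle s,t\rangle/v>\epsilon$ and $b_s=0$ if $\langle s,t\rangle/v<\epsilon/2$. Let $t'\in\{0,1\}^v$ be any vector consistent with all the $b_s$, in the sense that $\langle s,t'\rangle/v>\epsilon$ for all $s$ with $b_s=1$ and $\langle s,t'\rangle/v<\epsilon/2$ for all $s$ with $b_s=0$. Then the Hamming distance between $t$ and $t'$ is at most $v/25$.
   Context: $\langle s,t\rangle=\sum_{i=1}^v s_it_i$ is the standard inner product. *)

From mathcomp Require Import all_boot all_order all_algebra.
Set Implicit Arguments. Unset Strict Implicit. Unset Printing Implicit Defensive.
Import Order.TTheory GRing.Theory Num.Theory.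

Definition ip (v : nat) (s t : 'I_v -> bool) : nat :=
  \sum_(i < v) (s i && t i).

Definition hamming (v : nat) (s t : 'I_v -> bool) : nat :=
  #|[set i : 'I_v | s i != t i]|.

Local Open Scope ring_scope.
Definition eps : rat := 1 / 50%:R.

From mathcomp Require Import all_boot all_order all_algebra.
From mathcomp Require Import lra.
Set Implicit Arguments. Unset Strict Implicit. Unset Printing Implicit Defensive.
Import Order.TTheory GRing.Theory Num.Theory.
Local Open Scope ring_scope.

(* Test the oracle on the indicator s of the positions where t is 1 and t' is 0.
   Then <s,t'> = 0, so b_s = 1 is impossible for t', hence b_s = 0 and, by the
   guarantee for t, |t \ t'| = <s,t> <= eps v.  Symmetrically, for the indicator
   of t' \ t we have <s,t> = 0 < eps v / 2, so b_s = 0 and |t' \ t| < eps v / 2.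
   Adding, the Hamming distance is below (3/2) eps v <= v / 25. *)

Definition bdiff (v : nat) (t t' : 'I_v -> bool) : 'I_v -> bool :=
  fun i => t i && ~~ t' i.

Lemma ip_bdiff (v : nat) (t t' : 'I_v -> bool) : ip (bdiff t t') t' = 0%N.
Proof. by rewrite /ip big1 // => i _; rewrite /bdiff; case: (t i); case: (t' i). Qed.

Lemma hamming_ip_bdiff (v : nat) (t t' : 'I_v -> bool) :
  hamming t t' = (ip (bdiff t t') t + ip (bdiff t' t) t')%N.
Proof.
rewrite /hamming -sum1_card big_mkcond /ip -big_split /=.
by apply: eq_bigr => i _; rewrite inE /bdiff; case: (t i); case: (t' i).
Qed.

Lemma ratio_bounds_sum (x y v : rat) :
  0 < v -> x / v <= eps -> y / v < eps / 2%:R -> x + y <= v / 25%:R.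
Proof. by move=> v_gt0; rewrite !ler_pdivrMr // ltr_pdivrMr // /eps => *; lra. Qed.

Theorem lemma3 (v : nat) (hv : (1 <= v)%N) (t : 'I_v -> bool)
  (b : ('I_v -> bool) -> bool)
  (hb1 : forall s, eps < (ip s t)%:R / v%:R -> b s = true)
  (hb0 : forall s, (ip s t)%:R / v%:R < eps / 2%:R -> b s = false)
  (t' : 'I_v -> bool)
  (ht1 : forall s, b s = true -> eps < (ip s t')%:R / v%:R)
  (ht0 : forall s, b s = false -> (ip s t')%:R / v%:R < eps / 2%:R) :
  (hamming t t')%:R <= v%:R / 25%:R :> rat.
Proof.
have b_tt' : b (bdiff t t') = false.
  apply/negbTE/negP => /ht1; rewrite ip_bdiff mul0r /eps; lra.
have b_t't : b (bdiff t' t) = false.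
  by apply: hb0; rewrite ip_bdiff mul0r /eps; lra.
rewrite hamming_ip_bdiff natrD; apply: ratio_bounds_sum.
- by rewrite ltr0n.
- by rewrite leNgt; apply/negP => /hb1; rewrite b_tt'.
- exact: ht0.
Qed.
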